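(* Let $\mathfrak{S}=(\mathcal{X},\mathsf{S},\gamma,(\Lambda_{a})_{a\in\mathcal{A}})$ be a spectral decomposition system for the Euclidean space $\mathfrak{H}$ with spectral-induced ordering mapping $\tau$. Then: (i) $\tau\circ\gamma=\gamma$ and, for every $a\in\mathcal{A}$, $\gamma\circ\Lambda_a\circ\gamma=\gamma$; (ii) the range of $\gamma$ equals the range of $\tau$ and is a closed convex cone in $\mathcal{X}$; (iii) for all $X\in\mathfrak{H}$ and $a\in\mathcal{A}$, $\|X\|=\|\Lambda_a\gamma(X)\|=\|\gamma(X)\|$; (iv) $\|\gamma(X)-\gamma(Y)\|\leq\|X-Y\|$ for all $X,Y\in\mathfrak{H}$; (v) $\gamma(\alpha X)=\alpha\gamma(X)$ for all $X\in\mathfrak{H}$ and $\alpha\in[0,+\infty)$; (vi) $\gamma(-X)\in-\mathsf{S}\cdot\gamma(X)$ for all $X\in\mathfrak{H}$.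
   Context: A Euclidean space is a finite-dimensional real inner product space; inner products are written $\langle\cdot,\cdot\rangle$ and norms $\|\cdot\|$. Let $\mathfrak{H}$ and $\mathcal{X}$ be Euclidean spaces, let $\mathsf{S}$ be a group acting on $\mathcal{X}$ by linear isometries, let $\gamma\colon\mathfrak{H}\to\mathcal{X}$, and let $(\Lambda_a)_{a\in\mathcal{A}}$ be a family of linear operators from $\mathcal{X}$ to $\mathfrak{H}$. The orbit of $x$ is $\mathsf{S}\cdot x=\{s\cdot x: s\in\mathsf{S}\}$, and $-\mathsf{S}\cdot x=\{-s\cdot x: s\in\mathsf{S}\}$; a map $f$ on $\mathcal{X}$ is $\mathsf{S}$-invariant if $f(s\cdot x)=f(x)$ for all $s,x$. The tuple is a spectral decomposition system for $\mathfrak{H}$ if: [A] every $\Lambda_a$ is an isometry; [B] there exists an $\mathsf{S}$-invariant $\tau\colon\mathcal{X}\to\mathcal{X}$ with $\tau(x)\in\mathsf{S}\cdot x$ for all $x$ and $\gamma\circ\Lambda_a=\tau$ for all $a$; [C] for every $X\in\mathfrak{H}$ there is $a$ with $X=\Lambda_a\gamma(X)$; [D] $\langle X,Y\rangle\leq\langle\gamma(X),\gamma(Y)\rangle$ for all $X,Y\in\mathfrak{H}$. The map $\tau$ in [B] is the spectral-induced ordering mapping. *)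

(* Euclidean spaces as finite-dimensional vector spaces
   (vectType) over a real field R : realType, equipped with an inner product. *)
From HB Require Import structures.
From mathcomp Require Import all_boot all_order all_algebra.
From mathcomp Require Import reals.
Set Implicit Arguments. Unset Strict Implicit. Unset Printing Implicit Defensive.
Import Order.TTheory GRing.Theory Num.Theory.
Local Open Scope ring_scope.

Section Euclid.
Variable R : realType.

Definition is_inner_product (V : vectType R) (ip : V -> V -> R) : Prop :=
  [/\ (forall x y, ip x y = ip y x),
      (forall (a : R) x y z, ip (a *: x + y) z = a * ip x z + ip y z)
    & (forall x, x != 0 -> 0 < ip x x)].

Definition ipnorm (V : vectType R) (ip : V -> V -> R) (x : V) : R :=
  Num.sqrt (ip x x).

Definition ip_closed (V : vectType R) (ip : V -> V -> R) (C : V -> Prop) : Prop :=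
  forall x, (forall e : R, 0 < e -> exists2 c, C c & ipnorm ip (x - c) < e) -> C x.

Definition convex_set (V : vectType R) (C : V -> Prop) : Prop :=
  forall x y (t : R), C x -> C y -> 0 <= t <= 1 -> C (t *: x + (1 - t) *: y).

(* cone in the sense of Bauschke--Combettes: C = R_{++} C *)
Definition cone_set (V : vectType R) (C : V -> Prop) : Prop :=
  forall x (a : R), C x -> 0 < a -> C (a *: x).

Definition is_group (S : Type) (mul : S -> S -> S) (one : S) (inv : S -> S) : Prop :=
  [/\ (forall a b c, mul a (mul b c) = mul (mul a b) c),
      (forall a, mul one a = a /\ mul a one = a)
    & (forall a, mul (inv a) a = one /\ mul a (inv a) = one)].

Definition is_isometric_action (X : vectType R) (ipX : X -> X -> R)
  (S : Type) (mul : S -> S -> S) (one : S) (inv : S -> S)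
  (act : S -> {linear X -> X}) : Prop :=
  [/\ is_group mul one inv,
      (forall x, act one x = x),
      (forall s t x, act (mul s t) x = act s (act t x))
    & (forall s x, ipnorm ipX (act s x) = ipnorm ipX x)].

Definition orbit (X : vectType R) (S : Type) (act : S -> {linear X -> X}) (x : X)
  : X -> Prop := fun y => exists s, y = act s x.

Definition neg_orbit (X : vectType R) (S : Type) (act : S -> {linear X -> X}) (x : X)
  : X -> Prop := fun y => exists s, y = - act s x.

Definition S_invariant (X : vectType R) (S : Type) (act : S -> {linear X -> X})
  (f : X -> X) : Prop := forall s x, f (act s x) = f x.

Definition is_SIOM (H X : vectType R) (S : Type) (act : S -> {linear X -> X})
  (gamma : H -> X) (A : Type) (Lambda : A -> {linear X -> H}) (tau : X -> X) : Prop :=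
  [/\ S_invariant act tau,
      (forall x, orbit act x (tau x))
    & (forall a x, gamma (Lambda a x) = tau x)].

Definition spectral_decomposition_system (H : vectType R) (ipH : H -> H -> R)
  (X : vectType R) (ipX : X -> X -> R) (S : Type) (act : S -> {linear X -> X})
  (gamma : H -> X) (A : Type) (Lambda : A -> {linear X -> H}) : Prop :=
  [/\ (forall a x, ipnorm ipH (Lambda a x) = ipnorm ipX x),          (* [A] *)
      (exists tau, is_SIOM act gamma Lambda tau),                     (* [B] *)
      (forall Y : H, exists a, Y = Lambda a (gamma Y))                (* [C] *)
    & (forall Y Z : H, ipH Y Z <= ipX (gamma Y) (gamma Z))].          (* [D] *)

End Euclid.

From Pilot Require Import Defs.
From HB Require Import structures.
From mathcomp Require Import all_boot all_order all_algebra.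
From mathcomp Require Import reals lra.
Import Order.TTheory GRing.Theory Num.Theory.
Local Open Scope ring_scope.

(* By [C] every X is Lambda_a (gamma X), so by [A] gamma preserves norms,
   while by [D] it can only increase inner products.  All six items follow
   from the observation that vectors u, v with |u|^2 + |v|^2 <= 2 <u, v> are
   equal, and from the fact that tau = gamma o Lambda_a is a nonexpansive map
   whose fixed points form exactly the range of gamma. *)

Section InnerProduct.
Local Set Implicit Arguments.
Local Unset Strict Implicit.
Variables (R : realType) (V : vectType R) (ip : V -> V -> R).
Hypothesis ip_inner : is_inner_product ip.

Lemma ipC x y : ip x y = ip y x. Proof. by case: ip_inner. Qed.

Lemma ip_linear a x y z : ip (a *: x + y) z = a * ip x z + ip y z.
Proof. by case: ip_inner. Qed.

Lemma ipDl x y z : ip (x + y) z = ip x z + ip y z.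
Proof. by have := ip_linear 1 x y z; rewrite scale1r mul1r. Qed.

Lemma ip0l z : ip 0 z = 0.
Proof. by have := ipDl 0 0 z; rewrite addr0 => h; lra. Qed.

Lemma ipZl a x z : ip (a *: x) z = a * ip x z.
Proof. by rewrite -[a *: x]addr0 ip_linear ip0l addr0. Qed.

Lemma ipNl x z : ip (- x) z = - ip x z.
Proof. by rewrite -scaleN1r ipZl mulN1r. Qed.

Lemma ipDr x y z : ip z (x + y) = ip z x + ip z y.
Proof. by rewrite ipC ipDl !(ipC z). Qed.

Lemma ipZr a x z : ip z (a *: x) = a * ip z x.
Proof. by rewrite ipC ipZl ipC. Qed.

Lemma ipNr x z : ip z (- x) = - ip z x.
Proof. by rewrite ipC ipNl ipC. Qed.

Lemma ip_ge0 x : 0 <= ip x x.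
Proof.
have [->|x_neq0] := eqVneq x 0; first by rewrite ip0l.
by case: ip_inner => _ _ /(_ _ x_neq0) /ltW.
Qed.

Lemma ip_le0_eq0 x : ip x x <= 0 -> x = 0.
Proof.
move=> x_le0; apply/eqP/negPn/negP => x_neq0.
by case: ip_inner => _ _ /(_ _ x_neq0); rewrite ltNge x_le0.
Qed.

Lemma ipDD x y : ip (x + y) (x + y) = ip x x + 2 * ip x y + ip y y.
Proof. rewrite ipDl !ipDr (ipC y x); lra. Qed.

Lemma ipBB x y : ip (x - y) (x - y) = ip x x - 2 * ip x y + ip y y.
Proof. rewrite ipDD ipNr ipNl ipNr opprK; lra. Qed.

Lemma ipNN x : ip (- x) (- x) = ip x x.
Proof. by rewrite ipNl ipNr opprK. Qed.

Lemma ipDD_le x y : ip (x + y) (x + y) <= 2 * ip x x + 2 * ip y y.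
Proof. have := ip_ge0 (x - y); rewrite ipBB ipDD; lra. Qed.

Lemma ip_eq_of_le u v : ip u u + ip v v <= 2 * ip u v -> u = v.
Proof. by move=> uv; apply/subr0_eq/ip_le0_eq0; rewrite ipBB; lra. Qed.

Lemma ip_eq0_small x : (forall e, 0 < e -> ip x x < e) -> x = 0.
Proof.
move=> small; apply: ip_le0_eq0; rewrite leNgt; apply/negP => x_gt0.
by have := small _ x_gt0; rewrite ltxx.
Qed.

Lemma ip_closed_fixed (f : V -> V) :
  (forall x y, ip (f x - f y) (f x - f y) <= ip (x - y) (x - y)) ->
  ip_closed ip (fun x => f x = x).
Proof.
move=> f_nonexp x x_adh; apply/subr0_eq/ip_eq0_small => e e_gt0.
have [|c fc xc] := x_adh (Num.sqrt (e / 4)); first by rewrite sqrtr_gt0 divr_gt0.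
have {}xc : ip (x - c) (x - c) < e / 4 by rewrite -ltr_sqrt ?divr_gt0.
have split_d : f x - x = (f x - f c) + - (x - c) by rewrite fc opprB addrA subrK.
have := ipDD_le (f x - f c) (- (x - c)); rewrite -split_d ipNN.
have := f_nonexp x c; lra.
Qed.

End InnerProduct.

Section SpectralDecomposition.
Local Set Implicit Arguments.
Local Unset Strict Implicit.
Variables (R : realType) (H X : vectType R) (ipH : H -> H -> R) (ipX : X -> X -> R).
Variables (S : Type) (act : S -> {linear X -> X}).
Variables (gamma : H -> X) (A : Type) (Lambda : A -> {linear X -> H}) (tau : X -> X).
Hypothesis ipH_inner : is_inner_product ipH.
Hypothesis ipX_inner : is_inner_product ipX.
Hypothesis Lambda_isometry : forall a x, ipnorm ipH (Lambda a x) = ipnorm ipX x.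
Hypothesis gamma_Lambda : forall a x, gamma (Lambda a x) = tau x.
Hypothesis Lambda_gamma : forall Y, exists a, Y = Lambda a (gamma Y).
Hypothesis ip_le_gamma : forall Y Z, ipH Y Z <= ipX (gamma Y) (gamma Z).

Lemma ip_Lambda_diag a x : ipH (Lambda a x) (Lambda a x) = ipX x x.
Proof. by apply/eqP; rewrite -eqr_sqrt ?ip_ge0 //; apply/eqP/Lambda_isometry. Qed.

Lemma ip_Lambda a x y : ipH (Lambda a x) (Lambda a y) = ipX x y.
Proof.
have := ip_Lambda_diag a (x + y).
by rewrite linearD /= !ipDD // !ip_Lambda_diag; lra.
Qed.

Lemma tau_gamma Y : tau (gamma Y) = gamma Y.
Proof. by have [a {2}->] := Lambda_gamma Y; rewrite gamma_Lambda. Qed.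

Lemma gamma_Lambda_gamma a Y : gamma (Lambda a (gamma Y)) = gamma Y.
Proof. by rewrite gamma_Lambda tau_gamma. Qed.

Lemma ipnorm_gamma Y : ipnorm ipX (gamma Y) = ipnorm ipH Y.
Proof. by have [a {2}->] := Lambda_gamma Y; rewrite Lambda_isometry. Qed.

Lemma ip_gamma_diag Y : ipX (gamma Y) (gamma Y) = ipH Y Y.
Proof. by apply/eqP; rewrite -eqr_sqrt ?ip_ge0 //; apply/eqP/ipnorm_gamma. Qed.

Lemma ip_gammaBB_le Y Z :
  ipX (gamma Y - gamma Z) (gamma Y - gamma Z) <= ipH (Y - Z) (Y - Z).
Proof. by rewrite !ipBB // !ip_gamma_diag; have := ip_le_gamma Y Z; lra. Qed.

Lemma gamma_nonexpansive Y Z :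
  ipnorm ipX (gamma Y - gamma Z) <= ipnorm ipH (Y - Z).
Proof. by rewrite /ipnorm ler_sqrt ?ip_ge0 ?ip_gammaBB_le. Qed.

Lemma tau_nonexpansive x y :
  ipX (tau x - tau y) (tau x - tau y) <= ipX (x - y) (x - y).
Proof.
have [a _] := Lambda_gamma 0.
rewrite -!(gamma_Lambda a) -(ip_Lambda_diag a (x - y)) linearB.
exact: ip_gammaBB_le.
Qed.

Lemma range_gammaP x : (exists Y, gamma Y = x) <-> tau x = x.
Proof.
split=> [[Y <-]|tau_x]; first exact: tau_gamma.
by have [a _] := Lambda_gamma 0; exists (Lambda a x); rewrite gamma_Lambda.
Qed.

Lemma range_gamma_tau x : (exists Y, gamma Y = x) <-> (exists z, tau z = x).
Proof.
split=> [[Y <-]|[z <-]]; first by exists (gamma Y); apply: tau_gamma.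
by have [a _] := Lambda_gamma 0; exists (Lambda a z); apply: gamma_Lambda.
Qed.

(* |gamma (alpha Y)| = alpha |Y| = |alpha gamma Y|, and [D] at (alpha Y, Y) gives
   <gamma (alpha Y), gamma Y> >= alpha |Y|^2. *)
Lemma gammaZ Y alpha : 0 <= alpha -> gamma (alpha *: Y) = alpha *: gamma Y.
Proof.
move=> alpha_ge0; apply: (ip_eq_of_le ipX_inner).
rewrite !(ipZl ipX_inner) !(ipZr ipX_inner) !ip_gamma_diag.
rewrite (ipZl ipH_inner) (ipZr ipH_inner).
have := ler_wpM2l alpha_ge0 (ip_le_gamma (alpha *: Y) Y).
by rewrite (ipZl ipH_inner); nra.
Qed.

(* With W := Lambda_a (x + y), [D] gives <gamma W, x> >= <W, Lambda_a x> = <x + y, x>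
   because x = gamma (Lambda_a x), and likewise for y. *)
Lemma tau_gammaD Y Z : tau (gamma Y + gamma Z) = gamma Y + gamma Z.
Proof.
have [a _] := Lambda_gamma 0.
rewrite -(gamma_Lambda a); set x := gamma Y; set y := gamma Z.
apply: (ip_eq_of_le ipX_inner); rewrite ip_gamma_diag ip_Lambda_diag.
have := ip_le_gamma (Lambda a (x + y)) (Lambda a x).
have := ip_le_gamma (Lambda a (x + y)) (Lambda a y).
rewrite !ip_Lambda !gamma_Lambda_gamma !(ipDr ipX_inner) !(ipDl ipX_inner); lra.
Qed.

Lemma ip_closed_range_gamma : ip_closed ipX (fun x => exists Y, gamma Y = x).
Proof.
move=> x x_adh; apply/range_gammaP.
apply: (ip_closed_fixed ipX_inner tau_nonexpansive) => e /x_adh[c].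
by move=> /range_gammaP; exists c.
Qed.

Lemma cone_range_gamma : cone_set (fun x => exists Y, gamma Y = x).
Proof. by move=> x a [Y <-] /ltW a_ge0; exists (a *: Y); apply: gammaZ. Qed.

Lemma convex_range_gamma : convex_set (fun x => exists Y, gamma Y = x).
Proof.
move=> x y t [Y <-] [Z <-] /andP[t_ge0 t_le1]; apply/range_gammaP.
by rewrite -gammaZ // -gammaZ ?subr_ge0 // tau_gammaD.
Qed.

(* A bare [orbit] would refer to fingraph's orbit. *)
Lemma gammaN_neg_orbit :
  (forall x : X, Defs.orbit act x (tau x)) ->
  forall Y, neg_orbit act (gamma Y) (gamma (- Y)).
Proof.
move=> tau_orbit Y; have [a Y_eq] := Lambda_gamma Y.
have [s tau_eq] := tau_orbit (- gamma Y).
have -> : - Y = Lambda a (- gamma Y) by rewrite linearN -Y_eq.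
by exists s; rewrite gamma_Lambda tau_eq linearN.
Qed.

End SpectralDecomposition.

Theorem proposition3p5 (R : realType)
  (H : vectType R) (ipH : H -> H -> R) (X : vectType R) (ipX : X -> X -> R)
  (S : Type) (mul : S -> S -> S) (one : S) (inv : S -> S)
  (act : S -> {linear X -> X})
  (gamma : H -> X) (A : Type) (Lambda : A -> {linear X -> H}) (tau : X -> X) :
  is_inner_product ipH -> is_inner_product ipX ->
  is_isometric_action ipX mul one inv act ->
  spectral_decomposition_system ipH ipX act gamma Lambda ->
  is_SIOM act gamma Lambda tau ->
  (* (i) *)
  ((forall Y : H, tau (gamma Y) = gamma Y) /\
   (forall a (Y : H), gamma (Lambda a (gamma Y)) = gamma Y)) /\
  (* (ii) *)
  ((forall x : X, (exists Y : H, gamma Y = x) <-> (exists z : X, tau z = x)) /\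
   ip_closed ipX (fun x => exists Y : H, gamma Y = x) /\
   convex_set (fun x => exists Y : H, gamma Y = x) /\
   cone_set (fun x => exists Y : H, gamma Y = x)) /\
  (* (iii) *)
  (forall (Y : H) a,
     ipnorm ipH Y = ipnorm ipH (Lambda a (gamma Y)) /\
     ipnorm ipH (Lambda a (gamma Y)) = ipnorm ipX (gamma Y)) /\
  (* (iv) *)
  (forall Y Z : H, ipnorm ipX (gamma Y - gamma Z) <= ipnorm ipH (Y - Z)) /\
  (* (v) *)
  (forall (Y : H) (alpha : R), 0 <= alpha -> gamma (alpha *: Y) = alpha *: gamma Y) /\
  (* (vi) *)
  (forall Y : H, neg_orbit act (gamma Y) (gamma (- Y))).
Proof.
move=> ipH_inner ipX_inner _ [iso _ decomp ip_le] [_ tau_orbit gLambda].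
have tau_gamma := tau_gamma gLambda decomp.
split; first by split=> [|a] Y; rewrite ?gLambda tau_gamma.
split.
  split; first exact: range_gamma_tau gLambda decomp.
  split; first exact: ip_closed_range_gamma ipH_inner ipX_inner iso gLambda decomp ip_le.
  split; first exact: convex_range_gamma ipH_inner ipX_inner iso gLambda decomp ip_le.
  exact: cone_range_gamma ipH_inner ipX_inner iso decomp ip_le.
split; first by move=> Y a; rewrite iso (ipnorm_gamma iso decomp).
split; first exact: gamma_nonexpansive ipH_inner ipX_inner iso decomp ip_le.
split; first exact: gammaZ ipH_inner ipX_inner iso decomp ip_le.
exact: gammaN_neg_orbit gLambda decomp tau_orbit.
Qed.
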